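(* Let $S$ be a $\mathcal{C}$-semigroup with $S\neq\mathcal{C}$ and genus $g$. Then $S$ is pseudo-symmetric if and only if $g=1+\# I_S(F(S))$ and $F(S)/2\in\mathbb{N}^p$.
   Context: An integer cone $\mathcal{C}\subseteq\mathbb{N}^p$ is the set of integer points of a finitely generated rational cone in $\mathbb{Q}_{\ge0}^p$. A $\mathcal{C}$-semigroup is a subset $S\subseteq\mathcal{C}$ containing $0$, closed under addition, with $\mathcal{C}\setminus S$ finite; $\mathcal{H}(S)=\mathcal{C}\setminus S$ and $g=\#\mathcal{H}(S)$. A monomial order $\preceq$ on $\mathbb{N}^p$ is fixed (total order, compatible with addition, $\mathbf 0\preceq\mathbf c$ for all $\mathbf c$), and $F(S)=\max_\preceq\mathcal{H}(S)$. $\mathrm{PF}(S)=\{\mathbf x\in\mathcal{H}(S)\mid \mathbf x+(S\setminus\{0\})\subseteq S\}$. $S$ is pseudo-symmetric if $\mathrm{PF}(S)=\{F(S),F(S)/2\}$. For $L\subseteq\mathbb{N}^p$, $\mathbf x\le_L\mathbf y$ means $\mathbf y-\mathbf x\in L$. For $\mathbf n\in\mathcal{C}$, $I_S(\mathbf n)=\{\mathbf s\in S\mid \mathbf s\le_{\mathcal{C}}\mathbf n\}$. *)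

From mathcomp Require Import all_boot all_order all_algebra.
Set Implicit Arguments. Unset Strict Implicit. Unset Printing Implicit Defensive.
Import Order.TTheory GRing.Theory Num.Theory.

Definition vec (p : nat) := {ffun 'I_p -> nat}.

Definition vadd p (x y : vec p) : vec p := [ffun i => x i + y i].
Definition vzero p : vec p := [ffun _ => 0%N].
(* componentwise half (only meaningful when all components are even) *)
Definition vhalf p (x : vec p) : vec p := [ffun i => (x i)./2].
Definition half_in_Np p (x : vec p) : Prop := forall i, ~~ odd (x i).

Definition has_card p (P : vec p -> Prop) (n : nat) : Prop :=
  exists s : seq (vec p), [/\ uniq s, size s = n & forall x, x \in s <-> P x].

(* C is the set of integer points of a finitely generated rational cone
   in Q_{>=0}^p *)
Definition integer_cone p (C : vec p -> Prop) : Prop :=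
  exists (m : nat) (G : 'I_m -> 'I_p -> rat),
    (forall k j, (0 <= G k j)%R) /\
    forall x : vec p, C x <->
      exists lam : 'I_m -> rat, (forall k, (0 <= lam k)%R) /\
        forall j, ((x j)%:R = \sum_(k < m) lam k * G k j)%R.

Definition monomial_order p (le : vec p -> vec p -> Prop) : Prop :=
  (forall x, le x x) /\
  (forall x y, le x y -> le y x -> x = y) /\
  (forall x y z, le x y -> le y z -> le x z) /\
  (forall x y, le x y \/ le y x) /\
  (forall x y z, le x y -> le (vadd x z) (vadd y z)) /\
  (forall c, le (vzero p) c).

Definition C_semigroup p (C S : vec p -> Prop) : Prop :=
  [/\ (forall x, S x -> C x),
      S (vzero p),
      (forall x y, S x -> S y -> S (vadd x y)) &
      exists n, has_card (fun x => C x /\ ~ S x) n].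

Definition gaps p (C S : vec p -> Prop) (x : vec p) : Prop := C x /\ ~ S x.

Definition is_frobenius p (C S : vec p -> Prop) (le : vec p -> vec p -> Prop)
  (F : vec p) : Prop :=
  gaps C S F /\ forall h, gaps C S h -> le h F.

Definition PF p (C S : vec p -> Prop) (x : vec p) : Prop :=
  gaps C S x /\ forall s, S s -> s <> vzero p -> S (vadd x s).

Definition pseudo_symmetric p (C S : vec p -> Prop) (F : vec p) : Prop :=
  half_in_Np F /\ forall x, PF C S x <-> (x = F \/ x = vhalf F).

Definition le_L p (L : vec p -> Prop) (x y : vec p) : Prop :=
  exists c, L c /\ y = vadd x c.

Definition I_S p (C S : vec p -> Prop) (n : vec p) (s : vec p) : Prop :=
  S s /\ le_L C s n.

From mathcomp Require Import all_boot all_order all_algebra.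
From mathcomp Require Import zify lra.
From Stdlib Require Import Classical.
Set Implicit Arguments. Unset Strict Implicit. Unset Printing Implicit Defensive.
Import Order.TTheory GRing.Theory Num.Theory.

(* Pseudo-symmetric C-semigroups via the duality h |-> F - h.

   Write F for the Frobenius element of S and call S "gap-dual" when every
   gap h other than F/2 satisfies F - h in S.  The proof has three parts.
   1. F is pseudo-Frobenius (maximality for the monomial order), and when
      F/2 lies in N^p it is a gap (the cone is closed under halving).
   2. Every gap lies below some pseudo-Frobenius element: adding nonzero
      elements of S to a gap that is not pseudo-Frobenius yields gaps of
      strictly larger weight, which cannot go on forever.  From this,
      S is pseudo-symmetric iff F/2 is in N^p and S is gap-dual.
   3. The map s |-> F - s sends I_S(F) injectively into the gaps other
      than F/2, and it is onto exactly when S is gap-dual.  Comparing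
      cardinalities, S is gap-dual iff g = 1 + #I_S(F). *)

Section VectorArithmetic.
Variable p : nat.
Implicit Types x y z : vec p.

(* componentwise truncated subtraction, used for the dual F - s *)
Definition vsub x y : vec p := [ffun i => x i - y i].

(* the sum of the coordinates; it strictly grows when adding a nonzero vector *)
Definition weight x : nat := \sum_(i < p) x i.

Lemma vaddC x y : vadd x y = vadd y x.
Proof. by apply/ffunP => i; rewrite !ffunE addnC. Qed.

Lemma vaddA x y z : vadd x (vadd y z) = vadd (vadd x y) z.
Proof. by apply/ffunP => i; rewrite !ffunE addnA. Qed.

Lemma vaddr0 x : vadd x (vzero p) = x.
Proof. by apply/ffunP => i; rewrite !ffunE addn0. Qed.

Lemma vadd0r x : vadd (vzero p) x = x.
Proof. by apply/ffunP => i; rewrite !ffunE. Qed.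

Lemma vaddI x y z : vadd x y = vadd x z -> y = z.
Proof.
move/ffunP => E; apply/ffunP => i.
by have := E i; rewrite !ffunE => /eqP; rewrite eqn_add2l => /eqP.
Qed.

Lemma vadd_eq_self x y : vadd x y = x -> y = vzero p.
Proof. by move=> E; apply: (@vaddI x); rewrite vaddr0. Qed.

Lemma vaddK x y : vsub (vadd x y) x = y.
Proof. by apply/ffunP => i; rewrite !ffunE addKn. Qed.

Lemma vaddKr x y : vsub (vadd x y) y = x.
Proof. by apply/ffunP => i; rewrite !ffunE addnK. Qed.

Lemma vsub_inj_below F x y a b :
  F = vadd x a -> F = vadd y b -> vsub F x = vsub F y -> x = y.
Proof.
move=> Fx Fy; rewrite {1}Fx {1}Fy !vaddK => ab.
by rewrite -(vaddKr x a) -(vaddKr y b) -Fx -Fy ab.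
Qed.

Lemma vhalfK x : half_in_Np x -> vadd (vhalf x) (vhalf x) = x.
Proof.
move=> even_x; apply/ffunP => i; rewrite !ffunE addnn.
by have := odd_double_half (x i); move: (even_x i) => /negbTE ->.
Qed.

Lemma weight_lt_add x y : y <> vzero p -> weight x < weight (vadd x y).
Proof.
move=> y0; have -> : weight (vadd x y) = weight x + weight y.
  by rewrite /weight -big_split; apply: eq_bigr => i _; rewrite ffunE.
rewrite -[X in X < _]addn0 ltn_add2l lt0n sum_nat_eq0.
apply: contra_notN y0 => /forallP y_eq0.
by apply/ffunP => i; rewrite ffunE; apply/eqP; apply: y_eq0.
Qed.

End VectorArithmetic.

Section FiniteCardinality.
Variable p : nat.
Implicit Types P Q : vec p -> Prop.

Lemma has_card_image P Q (f : vec p -> vec p) n :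
  has_card Q n ->
  (forall x y, Q x -> Q y -> f x = f y -> x = y) ->
  (forall z, P z <-> exists2 x, Q x & z = f x) ->
  has_card P n.
Proof.
move=> [s [s_uniq s_size s_mem]] f_inj P_img; exists (map f s); split.
- by rewrite map_inj_in_uniq // => x y /s_mem Qx /s_mem Qy; apply: f_inj.
- by rewrite size_map.
- move=> z; rewrite P_img; split.
    by move=> /mapP [x /s_mem Qx ->]; exists x.
  by move=> [x /s_mem Qx ->]; apply: map_f.
Qed.

Lemma has_card_subset_full P Q k n :
  has_card P k -> has_card Q n -> (forall x, P x -> Q x) -> n <= k ->
  forall x, Q x -> P x.
Proof.
move=> [sP [uP szP memP]] [sQ [_ szQ memQ]] PQ nk x /memQ xQ.
have sub : {subset sP <= sQ} by move=> y /memP /PQ /memQ.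
have szQP : size sQ <= size sP by rewrite szP szQ.
have [_ eqPQ] := uniq_min_size uP sub szQP.
by apply/memP; rewrite eqPQ.
Qed.

Lemma has_card_remove Q n a :
  has_card Q n -> Q a ->
  exists2 m, n = m.+1 & has_card (fun x => Q x /\ x <> a) m.
Proof.
move=> [s [s_uniq s_size s_mem]] /s_mem a_in; exists (size (rem a s)).
  have s_pos : 0 < size s by case: s a_in {s_uniq s_size s_mem}.
  by rewrite size_rem // prednK.
exists (rem a s); split => //; first exact: rem_uniq.
move=> x; rewrite mem_rem_uniq // inE /=.
by split => [/andP [/eqP xa /s_mem Qx]|[/s_mem Qx /eqP xa]]; [split|apply/andP].
Qed.

End FiniteCardinality.

Section IntegerCones.
Variables (p : nat) (C : vec p -> Prop).
Hypothesis coneC : integer_cone C.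

(* add the coefficient vectors of the two representations *)
Lemma cone_add x y : C x -> C y -> C (vadd x y).
Proof.
case: coneC => [m [G [_ memC]]] /memC [l1 [l1_ge0 x_eq]] /memC [l2 [l2_ge0 y_eq]].
apply/memC; exists (fun k => l1 k + l2 k)%R; split.
  by move=> k; rewrite addr_ge0.
move=> j; rewrite ffunE natrD x_eq y_eq -big_split /=.
by apply: eq_bigr => k _; rewrite mulrDl.
Qed.

(* halve the coefficients: this is where rational cones are needed, and it
   puts F/2 in the cone *)
Lemma cone_half x : C (vadd x x) -> C x.
Proof.
case: coneC => [m [G [_ memC]]] /memC [l [l_ge0 xx_eq]].
apply/memC; exists (fun k => l k / 2)%R; split.
  by move=> k; rewrite divr_ge0.
move=> j; have := xx_eq j; rewrite ffunE natrD => E.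
have -> : (\sum_(k < m) l k / 2 * G k j = (\sum_(k < m) l k * G k j) / 2)%R.
  by rewrite mulr_suml; apply: eq_bigr => k _; rewrite mulrAC.
rewrite -E; lra.
Qed.

End IntegerCones.

Section PseudoFrobeniusCover.
Variables (p : nat) (C S : vec p -> Prop).
Hypothesis C_add : forall x y, C x -> C y -> C (vadd x y).
Hypothesis semigroupS : C_semigroup C S.

Lemma nonPF_gap_step h : gaps C S h -> ~ PF C S h ->
  exists s, [/\ S s, s <> vzero p & gaps C S (vadd h s)].
Proof.
case: semigroupS => S_in_C _ _ _ [Ch nSh] nPFh.
have [s [Ss s0 nShs]] : exists s, [/\ S s, s <> vzero p & ~ S (vadd h s)].
  apply: NNPP => none; apply: nPFh; split => // s Ss s0.
  by apply: NNPP => nShs; apply: none; exists s.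
by exists s; split => //; split => //; apply: C_add => //; apply: S_in_C.
Qed.

(* every gap h lies below a pseudo-Frobenius element h + t with t in S;
   the induction runs on the distance of weight h to the maximal weight
   of a gap, which exists because there are finitely many gaps *)
Lemma gap_below_PF h : gaps C S h -> exists2 t, S t & PF C S (vadd h t).
Proof.
case: semigroupS => _ S0 S_add [n [sH [_ _ memH]]].
pose M := \max_(x <- sH) weight x.
have weight_le_M x : gaps C S x -> weight x <= M.
  by move=> /memH x_in; apply: leq_bigmax_seq.
move: {2}(M - weight h) (leqnn (M - weight h)) => k.
elim: k h => [|k IH] h hk gh; have [PFh|nPFh] := classic (PF C S h);
  try by exists (vzero p); rewrite ?vaddr0.
all: have [s [Ss s0 ghs]] := nonPF_gap_step gh nPFh.
all: have := weight_lt_add h s0; have := weight_le_M _ ghs.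
- lia.
- move=> hs_le_M h_lt_hs.
  have [|t St PFt] := IH (vadd h s) _ ghs; first lia.
  by exists (vadd s t); [apply: S_add | rewrite vaddA].
Qed.

End PseudoFrobeniusCover.

Section FrobeniusDuality.
Variables (p : nat) (C S : vec p -> Prop) (le : vec p -> vec p -> Prop).
Variable F : vec p.
Hypothesis coneC : integer_cone C.
Hypothesis orderLe : monomial_order le.
Hypothesis semigroupS : C_semigroup C S.
Hypothesis frobF : is_frobenius C S le F.

(* F + s is above F for the monomial order, hence cannot be a gap *)
Lemma frobenius_PF : PF C S F.
Proof.
case: orderLe => [_ [le_anti [_ [_ [le_add le0]]]]].
case: semigroupS => S_in_C _ _ _; case: frobF => gF Fmax.
split => // s Ss s0; apply: NNPP => nSFs.
have gFs : gaps C S (vadd F s).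
  by split => //; apply: cone_add => //; [case: gF | apply: S_in_C].
have F_le_Fs : le F (vadd F s) by have := le_add _ _ F (le0 s); rewrite vadd0r vaddC.
by apply: s0; apply: vadd_eq_self; apply: le_anti (Fmax _ gFs) F_le_Fs.
Qed.

(* F/2 is a gap: it lies in the cone, and F/2 in S would force F in S *)
Lemma half_frobenius_gap : half_in_Np F -> gaps C S (vhalf F).
Proof.
move=> /vhalfK FhK; case: semigroupS => _ _ S_add _; case: frobF => [[CF nSF] _].
split; first by apply: (cone_half coneC); rewrite FhK.
by move=> SFh; apply: nSF; rewrite -FhK; apply: S_add.
Qed.

Definition gap_dual : Prop :=
  forall h, gaps C S h -> h <> vhalf F -> exists2 t, S t & F = vadd h t.

Lemma complement_other_gap s c : half_in_Np F -> S s -> C c ->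
  F = vadd s c -> gaps C S c /\ c <> vhalf F.
Proof.
move=> /vhalfK FhK Ss Cc Fsc; case: semigroupS => _ _ S_add _.
case: frobF => [[_ nSF] _].
have nSc : ~ S c by move=> Sc; apply: nSF; rewrite Fsc; apply: S_add.
split=> // cFh; apply: nSc; suff -> : c = s by [].
by apply: (@vaddI _ c); rewrite [vadd c s]vaddC -Fsc cFh FhK.
Qed.

(* a gap h other than F/2 lies below a pseudo-Frobenius element h + t;
   if h + t = F we are done, and if h + t = F/2 then t is nonzero, so
   F/2 + t is in S and F = h + (t + F/2) *)
Lemma pseudo_symmetric_gap_dual : pseudo_symmetric C S F -> gap_dual.
Proof.
move=> [/vhalfK FhK PF_F_Fh] h gh hFh.
have [t St PFht] := gap_below_PF (cone_add coneC) semigroupS gh.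
have [Fht|htFh] := proj1 (PF_F_Fh (vadd h t)) PFht; first by exists t.
have t0 : t <> vzero p by move=> t0; apply: hFh; rewrite -htFh t0 vaddr0.
have [_ PFh_add] := proj2 (PF_F_Fh (vhalf F)) (or_intror erefl).
exists (vadd (vhalf F) t); first exact: PFh_add.
by rewrite [vadd (vhalf F) t]vaddC vaddA htFh FhK.
Qed.

(* for S gap-dual, a pseudo-Frobenius x other than F/2 satisfies
   F = x + t with t in S, which forces t = 0; and F/2 is pseudo-Frobenius,
   since a gap F/2 + s with s nonzero would give F/2 = s + t in S *)
Lemma gap_dual_pseudo_symmetric :
  half_in_Np F -> gap_dual -> pseudo_symmetric C S F.
Proof.
move=> half dual; case: semigroupS => S_in_C _ S_add _; case: frobF => [[_ nSF] _].
have [CFh nSFh] := half_frobenius_gap half.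
split=> // x; split.
- move=> [gx PFx]; have [->|xFh] := eqVneq x (vhalf F); first by right.
  have [t St Fxt] := dual x gx (elimN eqP xFh); left.
  have [t0|t0] := eqVneq t (vzero p); first by rewrite Fxt t0 vaddr0.
  by case: nSF; rewrite Fxt; apply: PFx => //; apply/eqP.
- move=> [->|->]; first exact: frobenius_PF.
  split; first exact: half_frobenius_gap.
  move=> s Ss s0; apply: NNPP => nSFhs.
  have gFhs : gaps C S (vadd (vhalf F) s).
    by split => //; apply: cone_add => //; apply: S_in_C.
  have [|t St Ft] := dual _ gFhs; first by move/vadd_eq_self.
  apply: nSFh; have -> : vhalf F = vadd s t.
    by apply: (@vaddI _ (vhalf F)); rewrite vaddA -Ft vhalfK.
  exact: S_add.
Qed.

(* F - s is a gap other than F/2 for every s in I_S(F), and F - . is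
   injective there; so #I_S(F) <= g - 1, with equality only if every gap
   other than F/2 is of the form F - s, i.e. if S is gap-dual *)
Lemma card_I_S_gap_dual g k : half_in_Np F -> has_card (gaps C S) g ->
  has_card (I_S C S F) k -> g = 1 + k -> gap_dual.
Proof.
move=> half cardG cardI gk.
have [m gm cardO] := has_card_remove cardG (half_frobenius_gap half).
have cardImg : has_card (fun h => exists2 s, I_S C S F s & h = vsub F s) k.
  apply: has_card_image cardI _ (fun z => iff_refl _).
  by move=> x y [_ [a [_ Fa]]] [_ [b [_ Fb]]]; apply: vsub_inj_below Fa Fb.
have img_other h : (exists2 s, I_S C S F s & h = vsub F s) ->
    gaps C S h /\ h <> vhalf F.
  move=> [s [Ss [c [Cc Fc]]] ->]; have -> : vsub F s = c by rewrite Fc vaddK.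
  exact: complement_other_gap Fc.
have mk : m <= k by lia.
move=> h gh hFh.
have [s [Ss [c [Cc Fc]]] ->] :=
  has_card_subset_full cardImg cardO img_other mk (conj gh hFh).
by exists s => //; rewrite {2}Fc vaddK vaddC.
Qed.

(* conversely, for S gap-dual, F - . is a bijection from the gaps other
   than F/2 onto I_S(F), so #I_S(F) = g - 1 *)
Lemma gap_dual_card_I_S g : half_in_Np F -> has_card (gaps C S) g ->
  gap_dual -> exists k, has_card (I_S C S F) k /\ g = 1 + k.
Proof.
move=> half cardG dual.
have [m gm cardO] := has_card_remove cardG (half_frobenius_gap half).
exists m; split; last by rewrite gm.
apply: has_card_image cardO _ _.
  move=> x y [gx xFh] [gy yFh].
  have [a _ Fa] := dual x gx xFh; have [b _ Fb] := dual y gy yFh.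
  exact: vsub_inj_below Fa Fb.
move=> z; split.
- move=> [Sz [c [Cc Fc]]]; exists c; first exact: complement_other_gap Fc.
  by rewrite Fc vaddKr.
- move=> [x [gx xFh] ->]; have [t St Fxt] := dual x gx xFh.
  have -> : vsub F x = t by rewrite Fxt vaddK.
  split => //; exists x; split; last by rewrite vaddC.
  by case: gx.
Qed.

End FrobeniusDuality.

Theorem mainTheorem3 (p : nat) (C S : vec p -> Prop)
  (le : vec p -> vec p -> Prop) (F : vec p) (g : nat) :
  integer_cone C ->
  monomial_order le ->
  C_semigroup C S ->
  (exists x, C x /\ ~ S x) ->
  has_card (gaps C S) g ->
  is_frobenius C S le F ->
  pseudo_symmetric C S F <->
  ((exists k, has_card (I_S C S F) k /\ g = 1 + k) /\ half_in_Np F).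
Proof.
move=> coneC orderLe semigroupS _ cardG frobF.
split=> [ps | [[k [cardI gk]] half]].
- have half : half_in_Np F := ps.1.
  split => //; apply: (gap_dual_card_I_S coneC semigroupS frobF half cardG).
  exact: pseudo_symmetric_gap_dual coneC semigroupS ps.
- apply: (gap_dual_pseudo_symmetric coneC orderLe semigroupS frobF half).
  exact: (card_I_S_gap_dual coneC semigroupS frobF half cardG cardI gk).
Qed.
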